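(* Let $\mathbb{A}_1,\ldots,\mathbb{A}_n,\mathbb{B}$ be sized CPOs with sets of maximal elements $A_1,\ldots,A_n,B$ and size ordinals $\zeta_{\mathbb{A}_1},\ldots,\zeta_{\mathbb{A}_n},\zeta_{\mathbb{B}}$, and let $A=A_1\times\cdots\times A_n$. Let $h:A_1\times\cdots\times A_n\times B^m\to B$ and $g_i:A\to A$ ($i=1,\ldots,m$) with $g_i(x_1,\ldots,x_n)=\langle g_i^1(x_1,\ldots,x_n),\ldots,g_i^n(x_1,\ldots,x_n)\rangle$, where $g_i^j:A\to A_j$. Let $\eta_h$ be a production function for $h$ and $\eta_{i,j}$ a production function for $g_i^j$ ($i=1,\ldots,m$, $j=1,\ldots,n$). Assume that $\eta_h(\zeta_{\mathbb{A}_1},\ldots,\zeta_{\mathbb{A}_n},\beta_1,\ldots,\beta_m)>\min_{i=1,\ldots,m}\beta_i$ for all $\beta_1,\ldots,\beta_m\le\zeta_{\mathbb{B}}$ with $\beta_i<\zeta_{\mathbb{B}}$ for some $i$. If $f:A\to B$ is a function defined by corecursion from $h$ and $g_1,\ldots,g_m$, then there exists a production function $\eta_f$ for $f$ satisfying, for all $\bar\alpha\in\mathrm{On}(\zeta_{\mathbb{A}_1})\times\cdots\times\mathrm{On}(\zeta_{\mathbb{A}_n})$, $$\eta_f(\bar\alpha)=\eta_h\big(\bar\alpha,\ \eta_f(\eta_{1,1}(\bar\alpha),\ldots,\eta_{1,n}(\bar\alpha)),\ \ldots,\ \eta_f(\eta_{m,1}(\bar\alpha),\ldots,\eta_{m,n}(\bar\alpha))\big).$$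 Moreover, if $\eta_h$ and all $\eta_{i,j}$ are continuous, then so is $\eta_f$.
   Context: A CPO is a partial order with a least element in which every directed set has a supremum; a function between CPOs is continuous if it maps directed sets to directed sets and preserves their suprema; products of CPOs are ordered componentwise. For an ordinal $\zeta$, $\mathrm{On}(\zeta)$ is the set of ordinals $\le\zeta$ with the usual order. A sized CPO is a tuple $\langle\mathbb{A},\zeta,s,\mathtt{cut}\rangle$ where $\mathbb{A}$ is a CPO, $\zeta$ an ordinal (the size ordinal), $s:\mathbb{A}\to\mathrm{On}(\zeta)$ (size function) and $\mathtt{cut}:\mathrm{On}(\zeta)\times\mathbb{A}\to\mathbb{A}$, such that for $x\in\mathbb{A}$, $\alpha\le\zeta$: $s$ is surjective and continuous; $s(x)=\zeta$ iff $x$ is maximal in $\mathbb{A}$; $\mathtt{cut}$ is monotone in both arguments; $s(\mathtt{cut}(\alpha,x))=\alpha$ if $s(x)>\alpha$; $\mathtt{cut}(\alpha,x)=x$ if $s(x)\le\alpha$. A function between CPOs is regular if it is monotone and maps maximal elements to maximal elements. Given sized CPOs $\mathbb{A}_1,\ldots,\mathbb{A}_k,\mathbb{B}$ with sets of maximal elements $A_1,\ldots,A_k,B$, a production function for $f:A_1\times\cdots\times A_k\to B$ is any function $\eta:\mathrm{On}(\zeta_{\mathbb{A}_1})\times\cdots\times\mathrm{On}(\zeta_{\mathbb{A}_k})\to\mathrm{On}(\zeta_{\mathbb{B}})$ such that there is a regular $f^*:\mathbb{A}_1\times\cdots\times\mathbb{A}_k\to\mathbb{B}$ extending $f$ with $\eta(s(x_1),\ldots,s(x_k))=s(f^*(x_1,\ldots,x_k))$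 for all $x_i\in\mathbb{A}_i$. A function $f:S\to Q$ is defined by corecursion from $h:S\times Q^m\to Q$ and $g_i:S\to S$ if it is the unique function in $Q^S$ satisfying $f(x)=h(x,f(g_1(x)),\ldots,f(g_m(x)))$ for all $x\in S$. *)

From mathcomp Require Import all_boot.
Set Implicit Arguments. Unset Strict Implicit. Unset Printing Implicit Defensive.

Definition directed {T : Type} (le : T -> T -> Prop) (D : T -> Prop) : Prop :=
  (exists x, D x) /\
  (forall x y, D x -> D y -> exists z, D z /\ le x z /\ le y z).

Definition is_sup {T : Type} (le : T -> T -> Prop) (D : T -> Prop) (s : T) : Prop :=
  (forall x, D x -> le x s) /\ (forall u, (forall x, D x -> le x u) -> le s u).

Definition image {X Y : Type} (f : X -> Y) (D : X -> Prop) : Y -> Prop :=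
  fun y => exists x, D x /\ f x = y.

Definition continuous {X Y : Type} (leX : X -> X -> Prop) (leY : Y -> Y -> Prop)
  (f : X -> Y) : Prop :=
  forall D, directed leX D ->
    directed leY (image f D) /\
    (forall s, is_sup leX D s -> is_sup leY (image f D) (f s)).

Definition monotone {X Y : Type} (leX : X -> X -> Prop) (leY : Y -> Y -> Prop)
  (f : X -> Y) : Prop := forall x y, leX x y -> leY (f x) (f y).

Definition maximal {T : Type} (le : T -> T -> Prop) (x : T) : Prop :=
  forall y, le x y -> y = x.

Definition regular {X Y : Type} (leX : X -> X -> Prop) (leY : Y -> Y -> Prop)
  (f : X -> Y) : Prop :=
  monotone leX leY f /\ (forall x, maximal leX x -> maximal leY (f x)).

Definition prod_le {I : Type} {T : I -> Type} (le : forall i, T i -> T i -> Prop)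
  (x y : forall i, T i) : Prop := forall i, le i (x i) (y i).

Record cpo := CPO {
  car :> Type;
  le : car -> car -> Prop;
  le_refl : forall x, le x x;
  le_anti : forall x y, le x y -> le y x -> x = y;
  le_trans : forall x y z, le x y -> le y z -> le x z;
  bot : car;
  bot_le : forall x, le bot x;
  sup_ex : forall D, directed le D -> exists s, is_sup le D s }.

(** On(zeta) = the ordinals <= zeta with the usual order is represented (up to
   order isomorphism) by a type with a total well-order having a greatest
   element [otop] (playing the role of zeta).  *)
Record ordT := OrdT {
  ocar :> Type;
  ole : ocar -> ocar -> Prop;
  ole_refl : forall x, ole x x;
  ole_anti : forall x y, ole x y -> ole y x -> x = y;
  ole_trans : forall x y z, ole x y -> ole y z -> ole x z;
  ole_total : forall x y, ole x y \/ ole y x;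
  olt_wf : well_founded (fun x y => ole x y /\ x <> y);
  otop : ocar;
  ole_top : forall x, ole x otop }.

Definition olt (O : ordT) (x y : O) : Prop := ole x y /\ x <> y.

Record sized_cpo := SizedCPO {
  scpo :> cpo;
  zeta : ordT;
  size : scpo -> zeta;
  cut : zeta -> scpo -> scpo;
  size_surj : forall a : zeta, exists x, size x = a;
  size_cont : continuous (@le scpo) (@ole zeta) size;
  size_top : forall x, size x = otop zeta <-> maximal (@le scpo) x;
  cut_mono : forall a b x y, ole a b -> le x y -> le (cut a x) (cut b y);
  cut_size : forall a x, olt a (size x) -> size (cut a x) = a;
  cut_id : forall a x, ole (size x) a -> cut a x = x }.

Definition Max (A : sized_cpo) : Type := {x : A | maximal (@le A) x}.

Definition production_function {I : Type} (A : I -> sized_cpo) (B : sized_cpo)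
  (f : (forall i, Max (A i)) -> Max B)
  (eta : (forall i, zeta (A i)) -> zeta B) : Prop :=
  exists fstar : (forall i, A i) -> B,
    regular (prod_le (fun i => @le (A i))) (@le B) fstar /\
    (forall x : forall i, Max (A i), fstar (fun i => proj1_sig (x i)) = proj1_sig (f x)) /\
    (forall x : forall i, A i, eta (fun i => size (x i)) = size (fstar x)).

Definition ord_continuous {I : Type} (A : I -> sized_cpo) (B : sized_cpo)
  (eta : (forall i, zeta (A i)) -> zeta B) : Prop :=
  continuous (prod_le (fun i => @ole (zeta (A i)))) (@ole (zeta B)) eta.

Definition hdom {n m : nat} (A : 'I_n -> sized_cpo) (B : sized_cpo)
  (j : 'I_n + 'I_m) : sized_cpo :=
  match j with inl i => A i | inr _ => B end.

Definition hjoin {n m : nat} {A : 'I_n -> sized_cpo} {B : sized_cpo}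
  {F : sized_cpo -> Type} (x : forall i, F (A i)) (y : 'I_m -> F B) :
  forall j : 'I_n + 'I_m, F (hdom A B j) :=
  fun j => match j as j0 return F (hdom A B j0) with
           | inl i => x i | inr k => y k end.

Definition corec_eq {n m : nat} {A : 'I_n -> sized_cpo} {B : sized_cpo}
  (h : (forall j : 'I_n + 'I_m, Max (hdom A B j)) -> Max B)
  (g : 'I_m -> (forall i, Max (A i)) -> forall i, Max (A i))
  (f : (forall i, Max (A i)) -> Max B) : Prop :=
  forall x, f x = h (@hjoin n m A B Max x (fun k => f (g k x))).

Definition defined_by_corecursion {n m : nat} {A : 'I_n -> sized_cpo} {B : sized_cpo}
  (h : (forall j : 'I_n + 'I_m, Max (hdom A B j)) -> Max B)
  (g : 'I_m -> (forall i, Max (A i)) -> forall i, Max (A i))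
  (f : (forall i, Max (A i)) -> Max B) : Prop :=
  corec_eq h g f /\ (forall f', corec_eq h g f' -> forall x, f' x = f x).

Arguments production_function {I} A B f eta.
Arguments ord_continuous {I} A B eta.

(* The size function of f is read off an extension F of f to the whole CPOs that is
   monotone and size-invariant, i.e. whose output size depends only on the input sizes.
   Such an F is a fixed point of the monotone operator
   F |-> (x |-> h*(x, F(g*_1 x), ..., F(g*_m x))) on these maps; they form a directed-complete
   set containing the constant bottom map, so a fixed point exists by the Bourbaki-Witt
   argument, and its size function satisfies the recursive equation by construction.
   Evaluated at the top sizes, that equation and the growth condition on eta_h force the
   top size, so F maps maximal elements to maximal ones and restricts to a solution of the
   corecursive equation, which by uniqueness is f. Continuity of the size function is
   preserved by the operator and by directed suprema, hence holds at the fixed point. *)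

From mathcomp Require Import all_boot.
From Stdlib Require Import Classical FunctionalExtensionality ProofIrrelevance.
From Stdlib Require Import IndefiniteDescription.

Set Implicit Arguments.
Unset Strict Implicit.
Unset Printing Implicit Defensive.

Lemma is_sup_unique T (le : T -> T -> Prop) D s s' :
  (forall x y, le x y -> le y x -> x = y) -> is_sup le D s -> is_sup le D s' -> s = s'.
Proof. by move=> anti [ub1 lub1] [ub2 lub2]; apply: anti; [apply: lub1 | apply: lub2]. Qed.

Lemma eq_is_sup T (le : T -> T -> Prop) (D D' : T -> Prop) s :
  (forall x, D x <-> D' x) -> is_sup le D s -> is_sup le D' s.
Proof.
move=> eqD [ub lub]; split=> [x /eqD/ub // | u ubu].
by apply: lub => x /eqD; apply: ubu.
Qed.

Lemma image_comp X Y Z (f : X -> Y) (g : Y -> Z) D z :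
  image g (image f D) z <-> image (fun x => g (f x)) D z.
Proof.
split=> [[_ [[x [Dx <-]] <-]] | [x [Dx <-]]]; first by exists x.
by exists (f x); split; first exists x.
Qed.

Lemma prod_ole_refl I (Z : I -> ordT) (x : forall i, Z i) : prod_le (fun i => @ole (Z i)) x x.
Proof. by move=> i; apply: ole_refl. Qed.

Lemma continuous_monotone X Y (leX : X -> X -> Prop) (leY : Y -> Y -> Prop) f :
  (forall x, leX x x) -> continuous leX leY f -> monotone leX leY f.
Proof.
move=> reflX fc x y lexy.
pose D z := z = x \/ z = y.
have leDy z : D z -> leX z y by rewrite /D; case=> ->.
have Ddir : directed leX D.
  split; first by exists x; left.
  by move=> a b /leDy ? /leDy ?; exists y; split; [right | split].
have [ub _] := (fc D Ddir).2 y (conj leDy (fun u ubu => ubu y (or_intror erefl))).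
by apply: ub; exists x; split; first left.
Qed.

Lemma monotone_sup_continuous X Y (leX : X -> X -> Prop) (leY : Y -> Y -> Prop) f :
  monotone leX leY f ->
  (forall D, directed leX D -> forall s, is_sup leX D s -> is_sup leY (image f D) (f s)) ->
  continuous leX leY f.
Proof.
move=> fmono fsup D Ddir; split; last exact: fsup.
case: Ddir => [[x Dx] Dup]; split; first by exists (f x), x.
move=> _ _ [x1 [Dx1 <-]] [x2 [Dx2 <-]].
have [z [Dz [le1 le2]]] := Dup _ _ Dx1 Dx2.
by exists (f z); split; [exists z | split; apply: fmono].
Qed.

Lemma continuous_comp X Y Z (leX : X -> X -> Prop) (leY : Y -> Y -> Prop)
    (leZ : Z -> Z -> Prop) (f : X -> Y) (g : Y -> Z) :
  (forall x, leX x x) -> (forall y, leY y y) ->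
  continuous leX leY f -> continuous leY leZ g -> continuous leX leZ (fun x => g (f x)).
Proof.
move=> reflX reflY fc gc; apply: monotone_sup_continuous.
  by move=> x y /(continuous_monotone reflX fc) /(continuous_monotone reflY gc).
move=> D Ddir s Ds; have [fDdir fDs] := fc D Ddir.
exact: eq_is_sup (fun z => image_comp f g D z) ((gc _ fDdir).2 _ (fDs _ Ds)).
Qed.

Lemma continuous_prod X I (T : I -> Type) (leX : X -> X -> Prop)
    (leT : forall i, T i -> T i -> Prop) (f : X -> forall i, T i) :
  (forall x, leX x x) -> (forall i, continuous leX (leT i) (fun x => f x i)) ->
  continuous leX (prod_le leT) f.
Proof.
move=> reflX fc; apply: monotone_sup_continuous => [x y lexy i | D Ddir s Ds].
  exact: continuous_monotone reflX (fc i) _ _ lexy.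
split=> [_ [d [Dd <-]] i | u ubu i].
  by apply: continuous_monotone reflX (fc i) _ _ _; apply: Ds.1.
apply: ((fc i D Ddir).2 s Ds).2 => _ [d [Dd <-]].
exact: ubu (f d) (ex_intro _ d (conj Dd erefl)) i.
Qed.

Lemma continuous_proj (I : eqType) (T : I -> Type) (le : forall i, T i -> T i -> Prop) i :
  continuous (prod_le le) (le i) (fun x => x i).
Proof.
apply: monotone_sup_continuous => [x y /(_ i) // | D Ddir s Ds].
split=> [_ [d [Dd <-]] | u ubu]; first exact: Ds.1 d Dd i.
have := Ds.2 (dfwith s u) _ i; rewrite dfwith_in; apply=> d Dd j.
by case: dfwithP => [|j' _]; [apply: ubu; exists d | apply: Ds.1 d Dd j'].
Qed.

Lemma continuous_const X Y (leX : X -> X -> Prop) (leY : Y -> Y -> Prop) (c : Y) :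
  (forall y, leY y y) -> continuous leX leY (fun _ : X => c).
Proof.
move=> reflY; apply: monotone_sup_continuous => [x y _ // | D [[d Dd] _] s _].
by split=> [_ [x [_ <-]] // | u ubu]; apply: ubu; exists d.
Qed.

Lemma continuous_sup X Y (leX : X -> X -> Prop) (leY : Y -> Y -> Prop)
    (E : (X -> Y) -> Prop) (e : X -> Y) :
  (forall x, leX x x) -> (forall x y z, leY x y -> leY y z -> leY x z) ->
  (forall a, is_sup leY (image (fun phi => phi a) E) (e a)) ->
  (forall phi, E phi -> continuous leX leY phi) ->
  continuous leX leY e.
Proof.
move=> reflX transY esup Econt.
have emono : monotone leX leY e.
  move=> a b leab; apply: (esup a).2 => _ [phi [Ephi <-]].
  apply: (transY _ (phi b)); first exact: continuous_monotone reflX (Econt _ Ephi) _ _ leab.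
  by apply: (esup b).1; exists phi.
apply: monotone_sup_continuous => // D Ddir s Ds.
split=> [_ [a [Da <-]] | u ubu]; first by apply: emono; apply: Ds.1.
apply: (esup s).2 => _ [phi [Ephi <-]].
apply: ((Econt _ Ephi D Ddir).2 s Ds).2 => _ [a [Da <-]].
by apply: (transY _ (e a)); [apply: (esup a).1; exists phi | apply: ubu; exists a].
Qed.

Section TowerFixpoint.
Variables (X : Type) (leX : X -> X -> Prop) (Phi : X -> X) (G : X -> Prop) (b : X).
Hypotheses (reflX : forall x, leX x x)
  (antiX : forall x y, leX x y -> leX y x -> x = y)
  (transX : forall x y z, leX x y -> leX y z -> leX x z)
  (Phi_mono : monotone leX leX Phi)
  (Gb : G b) (b_least : forall x, leX b x) (G_Phi : forall x, G x -> G (Phi x))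
  (G_sup : forall D, directed leX D -> (forall x, D x -> G x) ->
     exists2 s, is_sup leX D s & G s).

(* Bourbaki-Witt / Pataraia: the least set containing [b] and closed under [Phi] and
   directed suprema is a chain, and its supremum is a fixed point of [Phi]. *)
Definition tower_closed (S : X -> Prop) :=
  [/\ S b, forall x, S x -> S (Phi x) &
      forall D, directed leX D -> (forall x, D x -> S x) -> forall s, is_sup leX D s -> S s].

Definition tower x := forall S, tower_closed S -> S x.

Lemma tower_closed_tower : tower_closed tower.
Proof.
split=> [S [] // | x Tx S cS | D Ddir DT s Ds S cS].
  by have [_ SPhi _] := cS; apply: SPhi; exact: Tx.
by have [_ _ Ssup] := cS; apply: (Ssup D Ddir _ s Ds) => x /DT; apply.
Qed.

Lemma tower_ind (P : X -> Prop) :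
  P b -> (forall x, tower x -> P x -> P (Phi x)) ->
  (forall D s, directed leX D -> (forall x, D x -> tower x /\ P x) ->
     is_sup leX D s -> P s) ->
  forall x, tower x -> P x.
Proof.
move=> Pb PPhi Psup x Tx; have [Tb TPhi Tsup] := tower_closed_tower.
suff : tower x /\ P x by case.
apply: (Tx (fun y => tower y /\ P y)); split=> [//|x' [Tx' Px'] | D Ddir DTP s Ds].
- by split; [apply: TPhi | apply: PPhi].
- by split; [apply: (Tsup D Ddir _ s Ds) => x' /DTP [] | apply: (Psup D s)].
Qed.

Lemma tower_le_Phi x : tower x -> leX x (Phi x).
Proof.
move: x; apply: tower_ind => [|x' _|D s Ddir DTP Ds]; [exact: b_least | exact: Phi_mono |].
apply: Ds.2 => d Dd; apply: (transX (DTP d Dd).2).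
by apply: Phi_mono; apply: Ds.1.
Qed.

Definition extreme c := forall x, tower x -> leX x c -> x <> c -> leX (Phi x) c.

Lemma extreme_split c : tower c -> extreme c ->
  forall x, tower x -> leX x c \/ leX (Phi c) x.
Proof.
move=> Tc Ec; apply: tower_ind => [|x Tx [lexc | lePhix] | D s Ddir DTP Ds].
- by left.
- have [-> | nexc] := classic (x = c); first by right; apply: reflX.
  by left; apply: Ec.
- by right; apply: transX (tower_le_Phi Tx).
- have [[d [Dd lePhid]] | noPhid] := classic (exists d, D d /\ leX (Phi c) d).
    by right; apply: transX lePhid (Ds.1 d Dd).
  left; apply: Ds.2 => d Dd; case: (DTP d Dd) => _ [// | lePhid].
  by case: noPhid; exists d.
Qed.

Lemma tower_extreme c : tower c -> extreme c.
Proof.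
move: c; apply: tower_ind
  => [x _ lexb nexb | c Tc Ec x Tx lexPhic nexPhic | D s Ddir DTE Ds x Tx lexs nexs].
- by case: nexb; apply: antiX.
- case: (extreme_split Tc Ec Tx) => [lexc | lePhicx]; last by case: nexPhic; apply: antiX.
  have [-> | nexc] := classic (x = c); first exact: reflX.
  by apply: transX (Ec x Tx lexc nexc) (tower_le_Phi Tc).
- have Phi_le_s d : D d -> d <> s -> leX (Phi d) s.
    move=> Dd neds; have [Td Ed] := DTE d Dd.
    apply: NNPP => nle; apply: neds; apply: antiX (Ds.1 d Dd) (Ds.2 d _) => d' Dd'.
    case: (extreme_split Td Ed (DTE d' Dd').1) => // lePhid.
    by case: nle; apply: transX lePhid (Ds.1 d' Dd').
  have [d [Dd lexd]] : exists d, D d /\ leX x d.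
    apply: NNPP => nox; case: nexs; apply: antiX lexs (Ds.2 x _) => d Dd.
    have [Td Ed] := DTE d Dd.
    case: (extreme_split Td Ed Tx) => [lexd | lePhidx]; first by case: nox; exists d.
    exact: transX (tower_le_Phi Td) lePhidx.
  have [exd | nexd] := classic (x = d); first by subst x; exact: Phi_le_s.
  by apply: transX ((DTE d Dd).2 x Tx lexd nexd) (Ds.1 d Dd).
Qed.

Lemma tower_directed : directed leX tower.
Proof.
case: tower_closed_tower => Tb _ _; split=> [|x y Tx Ty]; first by exists b.
case: (extreme_split Ty (tower_extreme Ty) Tx) => [lexy | lePhiyx].
  by exists y; split; last split.
by exists x; split; last split; last exact: transX (tower_le_Phi Ty) lePhiyx.
Qed.

Lemma tower_sub x : tower x -> G x.
Proof.
apply=> //; split=> // D Ddir DG s Ds.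
by have [s' Ds' Gs'] := G_sup Ddir DG; rewrite (is_sup_unique antiX Ds Ds').
Qed.

Theorem exists_fixpoint : exists2 x, G x & Phi x = x.
Proof.
have [s Ds Gs] := G_sup tower_directed tower_sub.
case: tower_closed_tower => _ TPhi Tsup; have Ts := Tsup _ tower_directed (fun _ Tx => Tx) s Ds.
exists s => //; apply: antiX; [exact: Ds.1 _ (TPhi _ Ts) | exact: tower_le_Phi].
Qed.
End TowerFixpoint.

Definition elem_of_size (C : sized_cpo) (a : zeta C) : C :=
  proj1_sig (constructive_indefinite_description _ (size_surj a)).

Lemma size_elem_of_size (C : sized_cpo) (a : zeta C) : size (elem_of_size a) = a.
Proof. exact: proj2_sig (constructive_indefinite_description _ (size_surj a)). Qed.

Lemma Max_inj (C : sized_cpo) (a b : Max C) : proj1_sig a = proj1_sig b -> a = b.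
Proof.
case: a b => [a amax] [b bmax] /= eab; subst b.
by congr exist; apply: proof_irrelevance.
Qed.

Lemma maximal_prod I (C : I -> cpo) (x : forall i, C i) :
  (forall i, maximal (@le (C i)) (x i)) -> maximal (prod_le (fun i => @le (C i))) x.
Proof. by move=> xmax y lexy; apply: functional_extensionality_dep => i; apply: xmax. Qed.

Lemma maximal_prod_component (I : eqType) (C : I -> cpo) (x : forall i, C i) i :
  maximal (prod_le (fun i => @le (C i))) x -> maximal (@le (C i)) (x i).
Proof.
move=> xmax y lexy; have := f_equal (fun z => z i) (xmax (dfwith x y) _).
rewrite dfwith_in; apply=> j.
by case: dfwithP => [|j' _]; [exact: lexy | exact: le_refl].
Qed.

Lemma regular_size_top I (A : I -> sized_cpo) (C : sized_cpo) (fstar : (forall i, A i) -> C)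
    (eta : (forall i, zeta (A i)) -> zeta C) :
  regular (prod_le (fun i => @le (A i))) (@le C) fstar ->
  (forall x, eta (fun i => size (x i)) = size (fstar x)) ->
  eta (fun i => otop (zeta (A i))) = otop (zeta C).
Proof.
move=> [_ fstar_max] fstar_size.
have <- : (fun i => size (elem_of_size (otop (zeta (A i))))) = fun i => otop (zeta (A i)).
  by apply: functional_extensionality_dep => i; rewrite size_elem_of_size.
rewrite fstar_size; apply/size_top/fstar_max/maximal_prod => i.
by apply/size_top; rewrite size_elem_of_size.
Qed.

Section CorecursiveProduction.
Variables (n m : nat) (A : 'I_n -> sized_cpo) (B : sized_cpo).
Variables (hstar : (forall j : 'I_n + 'I_m, hdom A B j) -> B)
  (gstar : forall (k : 'I_m) (j : 'I_n), (forall i, A i) -> A j)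
  (eta_h : (forall j : 'I_n + 'I_m, zeta (hdom A B j)) -> zeta B)
  (eta_g : forall (k : 'I_m) (j : 'I_n), (forall i, zeta (A i)) -> zeta (A j)).
Hypotheses (hstar_regular : regular (prod_le (fun j => @le (hdom A B j))) (@le B) hstar)
  (gstar_regular : forall k j, regular (prod_le (fun i => @le (A i))) (@le (A j)) (gstar k j))
  (hstar_size : forall x, eta_h (fun j => size (x j)) = size (hstar x))
  (gstar_size : forall k j x, eta_g k j (fun i => size (x i)) = size (gstar k j x)).

Local Notation join := (@hjoin n m A B (fun C => car (scpo C))).
Local Notation join_size := (@hjoin n m A B (fun C => ocar (zeta C))).
Local Notation top := (fun i => otop (zeta (A i))).
Local Notation ext := ((forall i, A i) -> B).

Definition ext_le (F F' : ext) := forall x, le (F x) (F' x).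

Definition gstar_tuple k x : forall j, A j := fun j => gstar k j x.

Definition corec_step (F : ext) : ext :=
  fun x => hstar (join x (fun k => F (gstar_tuple k x))).

Definition size_invariant (F : ext) := forall x y : forall i, A i,
  (forall i, size (x i) = size (y i)) -> size (F x) = size (F y).

Definition size_fun (F : ext) (a : forall i, zeta (A i)) : zeta B :=
  size (F (fun i => elem_of_size (a i))).

Definition productions_continuous :=
  ord_continuous (hdom A B) B eta_h /\ forall k j, ord_continuous A (A j) (eta_g k j).

(* The continuity clause is conditional so that a single fixed point serves both the
   size equation and the continuity statement. *)
Definition admissible (F : ext) :=
  [/\ monotone (prod_le (fun i => @le (A i))) (@le B) F, size_invariant F &
      productions_continuous -> ord_continuous A B (size_fun F)].

Lemma size_funE F : size_invariant F ->
  forall x, size_fun F (fun i => size (x i)) = size (F x).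
Proof. by move=> Finv x; apply: Finv => i; rewrite size_elem_of_size. Qed.

Lemma size_gstar_tuple k x j : size (gstar_tuple k x j) = eta_g k j (fun i => size (x i)).
Proof. by rewrite gstar_size. Qed.

Lemma size_corec_step F x : size (corec_step F x) =
  eta_h (join_size (fun i => size (x i)) (fun k => size (F (gstar_tuple k x)))).
Proof.
by rewrite -hstar_size; congr eta_h; apply: functional_extensionality_dep => -[i|k].
Qed.

Lemma size_fun_corec_step F : size_invariant F -> forall a,
  size_fun (corec_step F) a = eta_h (join_size a (fun k => size_fun F (fun j => eta_g k j a))).
Proof.
move=> Finv a; rewrite /size_fun size_corec_step; congr eta_h.
apply: functional_extensionality_dep => -[i|k] /=; first exact: size_elem_of_size.
rewrite -size_funE //; congr (size_fun F); apply: functional_extensionality_dep => j.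
by rewrite size_gstar_tuple; congr eta_g; apply: functional_extensionality_dep => i;
  rewrite size_elem_of_size.
Qed.

Lemma corec_step_mono : monotone ext_le ext_le corec_step.
Proof.
by move=> F F' leFF' x; apply: hstar_regular.1 => -[i|k] /=; [apply: le_refl | apply: leFF'].
Qed.

Lemma admissible_bot : admissible (fun _ => bot B).
Proof.
split=> [x y _ | x y _ // | _]; first exact: le_refl.
by apply: continuous_const; apply: ole_refl.
Qed.

Lemma admissible_corec_step F : admissible F -> admissible (corec_step F).
Proof.
move=> [Fmono Finv Fcont]; split=> [x y lexy | x y exy | etas_cont].
- apply: hstar_regular.1 => -[i|k] /=; first exact: lexy.
  by apply: Fmono => j; apply: (gstar_regular k j).1.
- rewrite !size_corec_step; congr eta_h; apply: functional_extensionality_dep => -[i|k] //=.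
  apply: Finv => j; rewrite !size_gstar_tuple; congr eta_g.
  exact: functional_extensionality_dep.
- have -> : size_fun (corec_step F) =
      fun a => eta_h (join_size a (fun k => size_fun F (fun j => eta_g k j a))).
    exact/functional_extensionality/size_fun_corec_step.
  apply: continuous_comp etas_cont.1; [exact: prod_ole_refl | exact: prod_ole_refl |].
  apply: (continuous_prod (leT := fun j => @ole (zeta (hdom A B j)))) => [|[i|k]] /=.
  - exact: prod_ole_refl.
  - exact: continuous_proj.
  apply: continuous_comp (Fcont etas_cont); [exact: prod_ole_refl | exact: prod_ole_refl |].
  apply: (continuous_prod (leT := fun j => @ole (zeta (A j)))) => [|j].
  - exact: prod_ole_refl.
  - exact: etas_cont.2 k j.
Qed.

Lemma directed_eval (D : ext -> Prop) x :
  directed ext_le D -> directed (@le B) (image (fun F => F x) D).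
Proof.
case=> [[F0 DF0] Dup]; split=> [|_ _ [F1 [DF1 <-]] [F2 [DF2 <-]]]; first by exists (F0 x), F0.
have [F3 [DF3 [le13 le23]]] := Dup _ _ DF1 DF2.
by exists (F3 x); split; [exists F3 | split].
Qed.

Lemma admissible_sup D : directed ext_le D -> (forall F, D F -> admissible F) ->
  exists2 s, is_sup ext_le D s & admissible s.
Proof.
move=> Ddir Dadm.
have [s sup_s] : exists s : ext, forall x, is_sup (@le B) (image (fun F => F x) D) (s x).
  exact: functional_choice _ (fun x => sup_ex (directed_eval x Ddir)).
have size_sup x : is_sup (@ole (zeta B)) (image (fun F => size (F x)) D) (size (s x)).
  have size_sup := (size_cont (directed_eval x Ddir)).2 _ (sup_s x).
  exact: eq_is_sup (fun o => image_comp _ _ D o) size_sup.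
exists s.
  split=> [F DF x | u ubu x]; first by apply: (sup_s x).1; exists F.
  by apply: (sup_s x).2 => _ [F [DF <-]]; apply: ubu.
split=> [x y lexy | x y exy | etas_cont].
- apply: (sup_s x).2 => _ [F [DF <-]]; have [Fmono _ _] := Dadm F DF.
  by apply: le_trans (Fmono _ _ lexy) _; apply: (sup_s y).1; exists F.
- apply: is_sup_unique (@ole_anti _) (size_sup x) _.
  apply: eq_is_sup (size_sup y) => o.
  by split=> -[F [DF <-]]; exists F; split=> //; have [_ Finv _] := Dadm F DF; apply: Finv.
- apply: (continuous_sup (E := image size_fun D)).
  + exact: prod_ole_refl.
  + exact: ole_trans.
  + move=> a; apply: eq_is_sup (size_sup (fun i => elem_of_size (a i))) => o.
    exact: iff_sym (image_comp size_fun (fun phi => phi a) D o).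
  + by move=> _ [F [DF <-]]; have [_ _ Fcont] := Dadm F DF; apply: Fcont.
Qed.

Lemma exists_admissible_fixpoint : exists2 F, admissible F & corec_step F = F.
Proof.
apply: (@exists_fixpoint _ ext_le corec_step admissible (fun _ => bot B)).
- by move=> F x; apply: le_refl.
- by move=> F F' le1 le2; apply: functional_extensionality => x; apply: le_anti.
- by move=> F1 F2 F3 le12 le23 x; apply: le_trans (le12 x) (le23 x).
- exact: corec_step_mono.
- exact: admissible_bot.
- by move=> F x; apply: bot_le.
- exact: admissible_corec_step.
- exact: admissible_sup.
Qed.

Hypothesis eta_h_grows : forall beta : 'I_m -> zeta B,
  (exists k, olt (beta k) (otop (zeta B))) ->
  exists k, olt (beta k) (eta_h (join_size top beta)).

Lemma size_fun_fixpoint_top F : size_invariant F -> corec_step F = F ->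
  size_fun F top = otop (zeta B).
Proof.
move=> Finv fixF; set e := size_fun F top.
have e_eq : e = eta_h (join_size top (fun _ => e)).
  rewrite {1}/e -fixF size_fun_corec_step //; congr (eta_h (join_size top _)).
  apply: functional_extensionality => k; congr (size_fun F).
  apply: functional_extensionality_dep => j.
  exact: regular_size_top (gstar_regular k j) (gstar_size k j).
apply: NNPP => ne; have e_lt_top : olt e (otop (zeta B)) by split; first exact: ole_top.
have [m0 | m_gt0] := posnP m.
  (* no recursive calls: [e] is [eta_h] at the top sizes, hence the top size *)
  apply: ne; rewrite e_eq -(regular_size_top hstar_regular hstar_size).
  congr eta_h; apply: functional_extensionality_dep => -[i // | k].
  by exfalso; case: k => k; rewrite m0.
have [k [_]] := eta_h_grows (beta := fun _ => e) (ex_intro _ (Ordinal m_gt0) e_lt_top).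
by rewrite -e_eq.
Qed.

Lemma fixpoint_regular F : admissible F -> corec_step F = F ->
  regular (prod_le (fun i => @le (A i))) (@le B) F.
Proof.
move=> [Fmono Finv _] fixF; split=> // x xmax; apply/size_top.
rewrite -size_funE // -(size_fun_fixpoint_top Finv fixF); congr (size_fun F).
apply: functional_extensionality_dep => i; apply/size_top.
exact: maximal_prod_component xmax.
Qed.

Variables (h : (forall j : 'I_n + 'I_m, Max (hdom A B j)) -> Max B)
  (g : 'I_m -> (forall i, Max (A i)) -> forall i, Max (A i))
  (f : (forall i, Max (A i)) -> Max B).
Hypotheses (hstar_ext : forall x, hstar (fun j => proj1_sig (x j)) = proj1_sig (h x))
  (gstar_ext : forall k j x, gstar k j (fun i => proj1_sig (x i)) = proj1_sig (g k x j))
  (f_corec : defined_by_corecursion h g f).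

Lemma corecursive_production_function : exists eta_f : (forall i, zeta (A i)) -> zeta B,
  [/\ production_function A B f eta_f,
      forall alpha,
        eta_f alpha = eta_h (join_size alpha (fun k => eta_f (fun j => eta_g k j alpha))) &
      productions_continuous -> ord_continuous A B eta_f].
Proof.
have [F Fadm fixF] := exists_admissible_fixpoint.
have Freg := fixpoint_regular Fadm fixF; have [_ Finv Fcont] := Fadm.
pose fF x : Max B := exist _ (F (fun i => proj1_sig (x i)))
  (Freg.2 _ (maximal_prod (fun i => proj2_sig (x i)))).
have fF_corec : corec_eq h g fF.
  move=> x; apply: Max_inj; rewrite /= -hstar_ext -{1}fixF; congr hstar.
  apply: functional_extensionality_dep => -[i // | k] /=; congr F.
  exact: functional_extensionality_dep (fun j => gstar_ext k j x).
exists (size_fun F); split=> [|alpha|]; last exact: Fcont.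
- exists F; split; first exact: Freg.
  split=> x; last exact: size_funE.
  by rewrite -(f_corec.2 fF fF_corec x).
- by rewrite -{1}fixF size_fun_corec_step.
Qed.
End CorecursiveProduction.

Theorem theorem4p13 (n m : nat) (A : 'I_n -> sized_cpo) (B : sized_cpo)
  (h : (forall j : 'I_n + 'I_m, Max (hdom A B j)) -> Max B)
  (g : 'I_m -> (forall i, Max (A i)) -> forall i, Max (A i))
  (eta_h : (forall j : 'I_n + 'I_m, zeta (hdom A B j)) -> zeta B)
  (eta_g : forall (k : 'I_m) (j : 'I_n), (forall i, zeta (A i)) -> zeta (A j))
  (Hh : production_function (@hdom n m A B) B h eta_h)
  (Hg : forall (k : 'I_m) (j : 'I_n),
          production_function A (A j) (fun x => g k x j) (eta_g k j))
  (Hgrow : forall beta : 'I_m -> zeta B,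
     (exists k, olt (beta k) (otop (zeta B))) ->
     exists k, olt (beta k)
       (eta_h (@hjoin n m A B (fun C => ocar (zeta C))
                 (fun i => otop (zeta (A i))) beta)))
  (f : (forall i, Max (A i)) -> Max B)
  (Hf : defined_by_corecursion h g f) :
  exists eta_f : (forall i, zeta (A i)) -> zeta B,
    production_function A B f eta_f /\
    (forall alpha : forall i, zeta (A i),
       eta_f alpha =
       eta_h (@hjoin n m A B (fun C => ocar (zeta C)) alpha
                (fun k => eta_f (fun j => eta_g k j alpha)))) /\
    ((ord_continuous (@hdom n m A B) B eta_h /\
      (forall k j, ord_continuous A (A j) (eta_g k j))) ->
     ord_continuous A B eta_f).
Proof.
have [hstar [hstar_regular [hstar_ext hstar_size]]] := Hh.
pose gstar_spec k j := proj2_sig (constructive_indefinite_description _ (Hg k j)).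
have [eta_f [eta_f_prod eta_f_eq eta_f_cont]] :=
  corecursive_production_function hstar_regular (fun k j => (gstar_spec k j).1)
    hstar_size (fun k j => (gstar_spec k j).2.2) Hgrow hstar_ext
    (fun k j => (gstar_spec k j).2.1) Hf.
by exists eta_f.
Qed.
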